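(* For each term $t$ there is at most one type $\tau$ such that $\Gamma\vdash t:\tau$ for some context $\Gamma$. If such a $\tau$ exists, there is a smallest context $\Gamma$ with $\Gamma\vdash t:\tau$, and it coincides with the set of free variables of $t$ (in the usual sense).
   Context: Types: $\rho,\tau::=\Diamond\mid\mathbf{B}\mid\tau\multimap\rho\mid\tau\otimes\rho\mid\tau\times\rho\mid\mathbf{L}(\tau)$. Raw terms: $r,s,t::=x^\tau\mid c\mid\lambda x^\tau.\,t\mid\langle t,s\rangle\mid ts\mid\{t\}$, where each variable $x^\tau$ carries a type (infinitely many variables of each type), application associates to the left, terms are identified up to renaming of bound variables ($\lambda$ is the only binder), and the constants $c$ with their types are $\mathsf{tt},\mathsf{ff}:\mathbf{B}$; $\mathsf{nil}_\tau:\mathbf{L}(\tau)$; $\mathsf{cons}_\tau:\Diamond\multimap\tau\multimap\mathbf{L}(\tau)\multimap\mathbf{L}(\tau)$; $\otimes_{\tau,\rho}:\tau\multimap\rho\multimap\tau\otimes\rho$. A context is a finite set of typed variables; $\Gamma_1,\Gamma_2$ denotes $\Gamma_1\cup\Gamma_2$ and presupposes $\Gamma_1\cap\Gamma_2=\emptyset$; $x^\tau$ also denotes $\{x^\tau\}$. The relation $\Gamma\vdash t:\tau$ is inductively defined by: (Var) $\Gamma,x^\tau\vdash x:\tau$; (Const) $\Gamma\vdash c:\tau$ for a constant $c$ of type $\tau$; ($\multimap^+$) from $\Gamma\cup\{x^\tau\}\vdash t:\rho$ infer $\Gamma\vdash\lambda x^\tau.t:\tau\multimap\rho$; ($\multimap^-$)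 from $\Gamma_1\vdash t:\tau\multimap\rho$ and $\Gamma_2\vdash s:\tau$ infer $\Gamma_1,\Gamma_2\vdash ts:\rho$; ($\times^+$) from $\Gamma\vdash t:\tau$ and $\Gamma\vdash s:\rho$ infer $\Gamma\vdash\langle t,s\rangle:\tau\times\rho$; ($\times^-_1$) from $\Gamma\vdash t:\tau\times\rho$ infer $\Gamma\vdash t\,\mathsf{tt}:\tau$; ($\times^-_0$) from $\Gamma\vdash t:\tau\times\rho$ infer $\Gamma\vdash t\,\mathsf{ff}:\rho$; ($\mathbf{B}^-$) from $\Gamma_1\vdash t:\mathbf{B}$, $\Gamma_2\vdash s:\tau$, $\Gamma_2\vdash r:\tau$ infer $\Gamma_1,\Gamma_2\vdash t\langle s,r\rangle:\tau$; ($\otimes^-$) from $\Gamma_1\vdash t:\tau\otimes\rho$ and $\Gamma_2,x^\tau,y^\rho\vdash s:\sigma$ infer $\Gamma_1,\Gamma_2\vdash t(\lambda x^\tau.\lambda y^\rho.s):\sigma$; ($\mathbf{L}^-$) from $\Gamma\vdash t:\mathbf{L}(\tau)$ and $\emptyset\vdash s:\Diamond\multimap\tau\multimap\rho\multimap\rho$ infer $\Gamma\vdash t\{s\}:\rho\multimap\rho$. *)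

From HB Require Import structures.
From mathcomp Require Import all_boot.
From mathcomp Require Import finmap.

Set Implicit Arguments.
Unset Strict Implicit.
Unset Printing Implicit Defensive.

Local Open Scope fset_scope.

(** Types  rho, tau ::= Diamond | B | tau -o rho | tau (x) rho | tau x rho | L(tau) *)
Inductive ty : Type :=
  | TDia : ty
  | TB : ty
  | TLolli : ty -> ty -> ty
  | TTens : ty -> ty -> ty
  | TProd : ty -> ty -> ty
  | TL : ty -> ty.

Fixpoint ty_enc (t : ty) : GenTree.tree nat :=
  match t with
  | TDia => GenTree.Node 0 [::]
  | TB => GenTree.Node 1 [::]
  | TLolli a b => GenTree.Node 2 [:: ty_enc a; ty_enc b]
  | TTens a b => GenTree.Node 3 [:: ty_enc a; ty_enc b]
  | TProd a b => GenTree.Node 4 [:: ty_enc a; ty_enc b]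
  | TL a => GenTree.Node 5 [:: ty_enc a]
  end.

Fixpoint ty_dec (e : GenTree.tree nat) : option ty :=
  match e with
  | GenTree.Node 0 [::] => Some TDia
  | GenTree.Node 1 [::] => Some TB
  | GenTree.Node 2 [:: a; b] =>
      match ty_dec a, ty_dec b with Some a', Some b' => Some (TLolli a' b') | _, _ => None end
  | GenTree.Node 3 [:: a; b] =>
      match ty_dec a, ty_dec b with Some a', Some b' => Some (TTens a' b') | _, _ => None end
  | GenTree.Node 4 [:: a; b] =>
      match ty_dec a, ty_dec b with Some a', Some b' => Some (TProd a' b') | _, _ => None end
  | GenTree.Node 5 [:: a] =>
      match ty_dec a with Some a' => Some (TL a') | _ => None end
  | _ => None
  end.

Lemma ty_encK : pcancel ty_enc ty_dec.
Proof. by elim=> //= [a -> b ->|a -> b ->|a -> b ->|a ->]. Qed.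

HB.instance Definition _ := Countable.copy ty (pcan_type ty_encK).

(** Typed variables x^tau: infinitely many (indexed by nat) of each type. *)
Definition var := (nat * ty)%type.
Definition vty (x : var) : ty := x.2.

Definition ctx := {fset var}.

Inductive const : Type :=
  | Ctt : const
  | Cff : const
  | Cnil : ty -> const
  | Ccons : ty -> const
  | Ctens : ty -> ty -> const.

Definition cty (c : const) : ty :=
  match c with
  | Ctt => TB
  | Cff => TB
  | Cnil t => TL t
  | Ccons t => TLolli TDia (TLolli t (TLolli (TL t) (TL t)))
  | Ctens t r => TLolli t (TLolli r (TTens t r))
  end.

(** Terms, in locally nameless representation (so that terms are identified
    up to renaming of bound variables):
      r, s, t ::= x^tau | c | lambda x^tau. t | <t, s> | t s | {t}
    [bvar n] is a de Bruijn index for a lambda-bound variable; [fvar x] a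
    (free, typed) variable; [abs tau t] is lambda x^tau. t. *)
Inductive tm : Type :=
  | bvar : nat -> tm
  | fvar : var -> tm
  | cst : const -> tm
  | abs : ty -> tm -> tm
  | pair : tm -> tm -> tm
  | app : tm -> tm -> tm
  | brace : tm -> tm.

Fixpoint open_rec (k : nat) (u : tm) (t : tm) : tm :=
  match t with
  | bvar i => if i == k then u else bvar i
  | fvar x => fvar x
  | cst c => cst c
  | abs T b => abs T (open_rec k.+1 u b)
  | pair a b => pair (open_rec k u a) (open_rec k u b)
  | app a b => app (open_rec k u a) (open_rec k u b)
  | brace a => brace (open_rec k u a)
  end.

Definition open (t : tm) (x : var) : tm := open_rec 0 (fvar x) t.

(** Body [s] of lambda x. lambda y. s instantiated with x and y. *)
Definition open2 (s : tm) (x y : var) : tm :=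
  open_rec 0 (fvar y) (open_rec 1 (fvar x) s).

Fixpoint fv (t : tm) : ctx :=
  match t with
  | bvar _ => fset0
  | fvar x => [fset x]
  | cst _ => fset0
  | abs _ b => fv b
  | pair a b => fv a `|` fv b
  | app a b => fv a `|` fv b
  | brace a => fv a
  end.

(** The typing relation  Gamma |- t : tau.
    [Gamma1, Gamma2] is written [Gamma1 `|` Gamma2] together with the
    disjointness presupposition [[disjoint Gamma1 & Gamma2]]. *)
Inductive typ : ctx -> tm -> ty -> Prop :=
  | T_Var (G : ctx) (x : var) :
      x \notin G -> typ (G `|` [fset x]) (fvar x) (vty x)
  | T_Const (G : ctx) (c : const) :
      typ G (cst c) (cty c)
  | T_Abs (G : ctx) (T R : ty) (b : tm) (x : var) :
      vty x = T -> x \notin fv b ->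
      typ (G `|` [fset x]) (open b x) R ->
      typ G (abs T b) (TLolli T R)
  | T_App (G1 G2 : ctx) (t s : tm) (T R : ty) :
      [disjoint G1 & G2] ->
      typ G1 t (TLolli T R) -> typ G2 s T ->
      typ (G1 `|` G2) (app t s) R
  | T_Pair (G : ctx) (t s : tm) (T R : ty) :
      typ G t T -> typ G s R -> typ G (pair t s) (TProd T R)
  | T_Fst (G : ctx) (t : tm) (T R : ty) :
      typ G t (TProd T R) -> typ G (app t (cst Ctt)) T
  | T_Snd (G : ctx) (t : tm) (T R : ty) :
      typ G t (TProd T R) -> typ G (app t (cst Cff)) R
  | T_If (G1 G2 : ctx) (t s r : tm) (T : ty) :
      [disjoint G1 & G2] ->
      typ G1 t TB -> typ G2 s T -> typ G2 r T ->
      typ (G1 `|` G2) (app t (pair s r)) T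
  | T_TensE (G1 G2 : ctx) (t s : tm) (T R S : ty) (x y : var) :
      [disjoint G1 & G2] ->
      vty x = T -> vty y = R ->
      x \notin G2 -> y \notin G2 `|` [fset x] ->
      x \notin fv s -> y \notin fv s ->
      typ G1 t (TTens T R) ->
      typ (G2 `|` [fset x] `|` [fset y]) (open2 s x y) S ->
      typ (G1 `|` G2) (app t (abs T (abs R s))) S
  | T_ListE (G : ctx) (t s : tm) (T R : ty) :
      typ G t (TL T) ->
      typ fset0 s (TLolli TDia (TLolli T (TLolli R R))) ->
      typ G (app t (brace s)) (TLolli R R).

From HB Require Import structures.
From mathcomp Require Import all_boot finmap.
Set Implicit Arguments.
Unset Strict Implicit.
Unset Printing Implicit Defensive.

Local Open Scope fset_scope.

(* Typing is syntax-directed: at an application [t u] the rule that applies is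
   determined by the type of [t], so a partial type-synthesis function computes
   the type of every typable term, which is therefore unique.  Typing is closed
   under enlarging the context, and a derivation can always be restricted to
   the free variables of the term, which every typing context must contain;
   hence [fv t] is the least context. *)

Lemma fsubset_fsetU1_notin (K : choiceType) (A B : {fset K}) x :
  A `<=` B `|` [fset x] -> x \notin A -> A `<=` B.
Proof.
move=> sAB xA; apply: fsubset_trans (_ : (B `|` [fset x]) `\ x `<=` B).
  by rewrite fsubsetD1 sAB.
by rewrite fsubDset fsetUC.
Qed.

Lemma widen_disjoint_fsetUl (K : choiceType) (A B C : {fset K}) :
  [disjoint A & B] -> A `|` B `<=` C ->
  exists A' : {fset K}, [/\ A `<=` A', [disjoint A' & B] & C = A' `|` B].
Proof.
move=> /fdisjointP dAB /fsubsetP sABC; exists (C `\` B); split.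
- by apply/fsubsetP => z zA; rewrite in_fsetD dAB //= sABC // in_fsetU zA.
- by apply/fdisjointP => z; rewrite in_fsetD => /andP[].
- apply/fsetP => z; rewrite !inE; case zB: (z \in B); rewrite ?orbT ?orbF //=.
  by rewrite sABC // in_fsetU zB orbT.
Qed.

(* [env] lists the types of the enclosing binders, innermost first, so that
   [bvar n] has type [onth env n].  The two projections have heads of the same
   type and are told apart by the syntax of their argument. *)
Fixpoint infer (env : seq ty) (t : tm) : option ty :=
  match t with
  | bvar n => onth env n
  | fvar x => Some (vty x)
  | cst c => Some (cty c)
  | abs T b => omap (TLolli T) (infer (T :: env) b)
  | pair a b =>
      if (infer env a, infer env b) is (Some A, Some B) then Some (TProd A B)
      else None
  | app a u =>
      match infer env a with
      | Some (TLolli _ B) => Some B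
      | Some (TProd A B) => if u is cst Ctt then Some A else Some B
      | Some TB =>
          if infer env u is Some (TProd A _) then Some A else None
      | Some (TTens _ _) =>
          if infer env u is Some (TLolli _ (TLolli _ C)) then Some C else None
      | Some (TL _) =>
          if infer env u is Some (TLolli _ (TLolli _ (TLolli R _)))
          then Some (TLolli R R) else None
      | _ => None
      end
  | brace s => infer env s
  end.

Lemma infer_open_rec b env x :
  infer env (open_rec (size env) (fvar x) b) = infer (rcons env (vty x)) b.
Proof.
elim: b env => [i|y|c|T b IH|a IHa c IHc|a IHa c IHc|a IHa] env //=.
- rewrite -cats1 onth_cat; case: eqP => [->|/eqP ne] /=.
    by rewrite ltnn subnn.
  case: ltnP => // le; rewrite onth_default // onth_default //.
  by rewrite subn_gt0 ltn_neqAle eq_sym ne.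
- by rewrite -(IH (T :: env)).
- by rewrite IHa IHc.
- rewrite IHa IHc; case: (infer _ a) => // -[] // A B.
  by case: c {IHc} => [i|y|[]|T b|s r|s r|s] //=; case: eqP.
Qed.

Lemma infer_open b x : infer [::] (open b x) = infer [:: vty x] b.
Proof. exact: (infer_open_rec b [::]). Qed.

Lemma infer_open2 s x y : infer [::] (open2 s x y) = infer [:: vty y; vty x] s.
Proof.
by rewrite /open2 (infer_open_rec _ [::]) (infer_open_rec _ [:: vty y]).
Qed.

Lemma typ_infer G t T : typ G t T -> infer [::] t = Some T.
Proof.
elim=> {G t T} //=.
- by move=> G T R b x <- _ _; rewrite infer_open => ->.
- by move=> G1 G2 t s T R _ _ ->.
- by move=> G t s T R _ -> _ ->.
- by move=> G t T R _ ->.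
- by move=> G t T R _ ->.
- by move=> G1 G2 t s r T _ _ -> _ -> _ ->.
- move=> G1 G2 t s T R S x y _ <- <- _ _ _ _ _ -> _.
  by rewrite infer_open2 => ->.
- by move=> G t s T R _ -> _ ->.
Qed.

Lemma typ_unique G1 G2 t T1 T2 : typ G1 t T1 -> typ G2 t T2 -> T1 = T2.
Proof. by move=> /typ_infer t1 /typ_infer; rewrite t1 => -[]. Qed.

Lemma fv_open_rec_sub b k u : fv b `<=` fv (open_rec k u b).
Proof. by elim: b k => //= *; rewrite ?fsub0set ?fsetUSS. Qed.

Lemma fv_open_rec_fvar b k x : fv (open_rec k (fvar x) b) `<=` fv b `|` [fset x].
Proof.
elim: b k => [i|y|c|T b IH|a IHa c IHc|a IHa c IHc|a IHa] k //=;
  rewrite ?fsub0set ?fsubsetUl //.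
- by case: eqP; rewrite /= ?fsubsetUr ?fsub0set.
- by apply: fsubset_trans (fsetUSS (IHa k) (IHc k)) _; rewrite fsetUACA fsetUid.
- by apply: fsubset_trans (fsetUSS (IHa k) (IHc k)) _; rewrite fsetUACA fsetUid.
Qed.

Lemma fv_open2 s x y : fv (open2 s x y) `<=` fv s `|` [fset x] `|` [fset y].
Proof.
apply: fsubset_trans (fv_open_rec_fvar _ 0 y) _.
by apply: fsetUSS (fv_open_rec_fvar _ 1 x) (fsubset_refl _).
Qed.

Lemma fv_open2_sub G s x y :
  x \notin fv s -> y \notin fv s ->
  fv (open2 s x y) `<=` G `|` [fset x] `|` [fset y] -> fv s `<=` G.
Proof.
move=> xs ys /(fsubset_trans (fv_open_rec_sub _ 0 _)).
move=> /(fsubset_trans (fv_open_rec_sub _ 1 _)) /fsubset_fsetU1_notin/(_ ys).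
by move=> /fsubset_fsetU1_notin; apply.
Qed.

Lemma typ_weaken G G' t T : G `<=` G' -> typ G t T -> typ G' t T.
Proof.
move=> + tT; elim: tT G' => {G t T}.
- move=> G x xG G' sGG'.
  have xG' : x \in G' by apply: (fsubsetP sGG'); rewrite fsetU1r.
  by rewrite -(fsetD1K xG') fsetUC; apply: T_Var; rewrite !inE eqxx.
- by move=> *; apply: T_Const.
- by move=> G T R b x vx xb _ IH G' sGG'; apply: (T_Abs vx xb); apply/IH/fsetSU.
- move=> G1 G2 t s T R d12 _ IH1 _ IH2 G'.
  case/(widen_disjoint_fsetUl d12) => G1' [s1 d1 ->].
  by apply: T_App => //; [apply: IH1 | apply: IH2].
- move=> G t s T R _ IH1 _ IH2 G' sGG'.
  by apply: T_Pair; [apply: IH1 | apply: IH2].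
- by move=> G t T R _ IH G' sGG'; apply/T_Fst/IH.
- by move=> G t T R _ IH G' sGG'; apply/T_Snd/IH.
- move=> G1 G2 t s r T d12 _ IH1 _ IH2 _ IH3 G'.
  case/(widen_disjoint_fsetUl d12) => G1' [s1 d1 ->].
  by apply: T_If => //; [apply: IH1 | apply: IH2 | apply: IH3].
- move=> G1 G2 t s T R S x y d12 vx vy xG yG xs ys _ IH sS _ G'.
  case/(widen_disjoint_fsetUl d12) => G1' [s1 d1 ->].
  exact: T_TensE d1 vx vy xG yG xs ys (IH _ s1) sS.
- by move=> G t s T R _ IH sT _ G' sGG'; apply: T_ListE sT; apply: IH.
Qed.

Lemma typ_fv_sub G t T : typ G t T -> fv t `<=` G.
Proof.
elim=> {G t T} /=.
- by move=> G x _; rewrite fsubsetUr.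
- by move=> G c; rewrite fsub0set.
- move=> G T R b x _ xb _ sbG.
  exact: fsubset_fsetU1_notin (fsubset_trans (fv_open_rec_sub _ _ _) sbG) xb.
- by move=> G1 G2 t s T R _ _ stG1 _ ssG2; rewrite fsetUSS.
- by move=> G t s T R _ stG _ ssG; rewrite fsubUset stG ssG.
- by move=> G t T R _; rewrite fsetU0.
- by move=> G t T R _; rewrite fsetU0.
- move=> G1 G2 t s r T _ _ stG1 _ ssG2 _ srG2.
  by rewrite fsetUSS // fsubUset ssG2.
- move=> G1 G2 t s T R S x y _ _ _ _ _ xs ys _ stG1 _ ssG2.
  by rewrite fsetUSS // (fv_open2_sub xs ys ssG2).
- by move=> G t s T R _ stG _; rewrite fsubset0 => /eqP ->; rewrite fsetU0.
Qed.

Lemma typ_fv G t T : typ G t T -> typ (fv t) t T.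
Proof.
elim=> {G t T} /=.
- by move=> G x _; rewrite -[[fset x]]fset0U; apply: T_Var; rewrite inE.
- by move=> G c; apply: T_Const.
- move=> G T R b x vx xb _ IH; apply: (T_Abs vx xb).
  exact: typ_weaken (fv_open_rec_fvar _ _ _) IH.
- move=> G1 G2 t s T R d12 /typ_fv_sub stG1 IH1 /typ_fv_sub ssG2 IH2.
  exact: T_App (fdisjointWl stG1 (fdisjointWr ssG2 d12)) IH1 IH2.
- move=> G t s T R _ IH1 _ IH2.
  by apply: T_Pair; apply: typ_weaken; [exact: fsubsetUl | | exact: fsubsetUr |].
- by move=> G t T R _ IH; rewrite fsetU0; apply: T_Fst IH.
- by move=> G t T R _ IH; rewrite fsetU0; apply: T_Snd IH.
- move=> G1 G2 t s r T d12 /typ_fv_sub stG1 IH1.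
  move=> /typ_fv_sub ssG2 IH2 /typ_fv_sub srG2 IH3.
  have srsG2 : fv s `|` fv r `<=` G2 by rewrite fsubUset ssG2.
  apply: T_If (fdisjointWl stG1 (fdisjointWr srsG2 d12)) IH1 _ _.
  + exact: typ_weaken (fsubsetUl _ _) IH2.
  + exact: typ_weaken (fsubsetUr _ _) IH3.
- move=> G1 G2 t s T R S x y d12 vx vy xG yG xs ys /typ_fv_sub stG1 IH1 sG2 IH2.
  have yx : y != x by apply: contraNneq yG => ->; rewrite fsetU1r.
  have ssG2 := fv_open2_sub xs ys (typ_fv_sub sG2).
  apply: (T_TensE _ vx vy xs _ xs ys IH1).
  + exact: fdisjointWl stG1 (fdisjointWr ssG2 d12).
  + by rewrite in_fsetU in_fset1 negb_or ys yx.
  + exact: typ_weaken (fv_open2 _ _ _) IH2.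
- move=> G t s T R _ IH1 sT _.
  have /eqP fvs0 : fv s == fset0 by rewrite -fsubset0 (typ_fv_sub sT).
  by rewrite fvs0 fsetU0; apply: T_ListE sT.
Qed.

Theorem lemma2p6 (t : tm) :
  (forall (T1 T2 : ty) (G1 G2 : ctx), typ G1 t T1 -> typ G2 t T2 -> T1 = T2) /\
  (forall T : ty, (exists G : ctx, typ G t T) ->
     exists G : ctx,
       typ G t T /\ (forall G' : ctx, typ G' t T -> G `<=` G') /\ G = fv t).
Proof.
split=> [T1 T2 G1 G2 | T [G tT]]; first exact: typ_unique.
by exists (fv t); split; [exact: typ_fv tT | split=> // G'; exact: typ_fv_sub].
Qed.
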